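(* For every $n\ge1$, $\langle r\rangle_{\mathrm{H}_n}=\frac{1}{2^nn!}\sum_{\sigma\in\mathrm{H}_n}r(\lambda_\sigma)=1$.
   Context: Signed factorization types: finitely supported $\lambda\colon\mathbb{N}\times\mathbb{N}\times\{1,-1,0\}\to\mathbb{Z}_{\ge0}$. $r(\lambda)=\prod_{d,e}(e+1)^{\lambda(d,e,1)}$ if $\lambda(d,e,-1)=0$ for all $d$ and all odd $e$, and $r(\lambda)=0$ otherwise. $\mathrm{H}_n=\mathbb{F}_2^n\rtimes S_n$ ($S_n$ permuting coordinates), elements $\sigma=x\tau$; $\lambda_\sigma(d,1,s)$ is the number of orbits $\Omega$ of $\tau$ on $\{1,\dots,n\}$ with $\#\Omega=d$ and $(-1)^{\sum_{i\in\Omega}x_i}=s$, and $\lambda_\sigma(d,e,s)=0$ for $e\ne1$. *)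

From HB Require Import structures.
From mathcomp Require Import all_boot all_order all_algebra all_fingroup.
Import GRing.Theory.
Set Implicit Arguments. Unset Strict Implicit. Unset Printing Implicit Defensive.

(* A signed factorization type  lambda : N x N x {1,-1,0} -> Z_{>=0}, finitely
   supported, is encoded as a finite multiset (a seq) of triples (d, e, s):
   lambda(d,e,s) = multiplicity of (d,e,s) in the seq.  Signs are integers,
   only the values 1, -1, 0 are meaningful. *)
Definition sftype := seq (nat * nat * int).

Definition sfval (l : sftype) (d e : nat) (s : int) : nat := count_mem (d, e, s) l.

Definition r_sf (l : sftype) : nat :=
  if has (fun t : nat * nat * int => (t.2 == (-1)%R) && odd t.1.2) l then 0
  else \prod_(t <- l | t.2 == 1%R) (t.1.2).+1.

(* Hyperoctahedral group H_n = F_2^n x| S_n, elements sigma = x tau. *)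
Definition Hn (n : nat) : finType := ({ffun 'I_n -> bool} * 'S_n)%type.

Definition orbit_sign n (x : {ffun 'I_n -> bool}) (Om : {set 'I_n}) : int :=
  if odd (\sum_(i in Om) (x i : nat)) then (-1)%R else 1%R.

Definition lambda_H n (sigma : Hn n) : sftype :=
  [seq (#|Om|, 1%N, orbit_sign sigma.1 Om) | Om : {set 'I_n} <- enum (porbits sigma.2)].

From HB Require Import structures.
From mathcomp Require Import all_boot all_order all_algebra all_fingroup.
Set Implicit Arguments. Unset Strict Implicit. Unset Printing Implicit Defensive.

(* For a fixed tau with set of cycles P, r(lambda_(x tau)) is 2^#|P| if every
   cycle of tau carries an even number of flipped signs of x, and 0 otherwise.
   The map sending x to its set of odd cycles is onto the subsets of P (take the
   indicator of a transversal of the blocks in S), and translating by a preimage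
   of S maps the fibre over the empty set bijectively onto the fibre over S. So
   the 2^#|P| fibres have equal size 2^n / 2^#|P|, every tau contributes 2^n,
   and the sum over H_n is 2^n n!. *)

Lemma odd_sum_bool (T : finType) (A : {pred T}) (x : T -> bool) :
  odd (\sum_(i in A) (x i : nat)) = \big[addb/false]_(i in A) x i.
Proof.
rewrite (big_morph odd oddD (erefl : odd 0 = false)).
by apply: eq_bigr => i _; rewrite oddb.
Qed.

Section OddBlocks.
Variables (T : finType) (P : {set {set T}}).

Definition odd_blocks (x : {ffun T -> bool}) : {set {set T}} :=
  [set B in P | odd (\sum_(i in B) (x i : nat))].

Definition xorf (x y : {ffun T -> bool}) : {ffun T -> bool} := [ffun i => x i (+) y i].

Lemma xorfK x : involutive (xorf x).
Proof. by move=> y; apply/ffunP => i; rewrite !ffunE addKb. Qed.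

Lemma xorf_inj x : injective (xorf x).
Proof. exact: inv_inj (xorfK x). Qed.

Lemma odd_blocks_xorf x y B :
  (B \in odd_blocks (xorf x y)) =
  (B \in P) && ((B \in odd_blocks x) (+) (B \in odd_blocks y)).
Proof.
rewrite !inE !odd_sum_bool; case: (B \in P) => //=.
by rewrite -big_split; apply: eq_bigr => i _; rewrite ffunE.
Qed.

Lemma odd_blocks_subset x : odd_blocks x \subset P.
Proof. by apply/subsetP => B; rewrite inE => /andP[]. Qed.

Lemma odd_blocks_xorf_eq x y :
  (odd_blocks (xorf x y) == odd_blocks x) = (odd_blocks y == set0).
Proof.
have notP z B : B \notin P -> (B \in odd_blocks z) = false.
  by move=> BnP; apply/negbTE; apply: contra BnP; apply: (subsetP (odd_blocks_subset z)).
apply/eqP/eqP => /setP e; apply/setP => B; have := e B; rewrite odd_blocks_xorf in_set0.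
  case BP: (B \in P) => /=; last by move=> _; rewrite notP // BP.
  by case: (B \in odd_blocks x) => // /negbTE.
by move=> ->; case BP: (B \in P); rewrite ?addbF // notP // BP.
Qed.

Section Partition.
Variable D : {set T}.
Hypothesis partP : partition P D.

Definition block_indicator (S : {set {set T}}) : {ffun T -> bool} :=
  [ffun i => (i \in transversal P D) && (pblock P i \in S)].

Lemma odd_blocks_indicator (S : {set {set T}}) :
  S \subset P -> odd_blocks (block_indicator S) = S.
Proof.
move=> SP; have /and3P[_ _ /forall_inP X1] := transversalP partP.
apply/setP => B; rewrite inE; case BP: (B \in P) => /=; last first.
  by apply/esym/negbTE; apply: contraFN BP; apply: (subsetP SP).
have -> : \sum_(i in B) (block_indicator S i : nat) =
           \sum_(i in B | i \in transversal P D) (B \in S : nat).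
  rewrite big_mkcondr /=; apply: eq_bigr => i iB.
  by rewrite ffunE (def_pblock (partition_trivIset partP) BP iB); case: (_ \in _).
rewrite sum_nat_cond_const.
have -> : [set i | (i \in B) && (i \in transversal P D)] = transversal P D :&: B.
  by apply/setP => i; rewrite !inE andbC.
by rewrite (eqP (X1 B BP)) mul1n oddb.
Qed.

Lemma card_odd_blocks_fiber (S : {set {set T}}) : S \subset P ->
  #|[set x | odd_blocks x == S]| = #|[set x | odd_blocks x == set0]|.
Proof.
move=> SP; rewrite -(card_preimset _ (@xorf_inj (block_indicator S))).
apply: eq_card => x.
by rewrite !inE -[X in _ == X](odd_blocks_indicator SP) odd_blocks_xorf_eq.
Qed.

Lemma card_odd_blocks0 : #|[set x | odd_blocks x == set0]| * 2 ^ #|P| = 2 ^ #|T|.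
Proof.
rewrite -card_powerset -[2]card_bool -card_ffun mulnC -sum_nat_const.
rewrite -[RHS]sum1_card.
rewrite [RHS](partition_big odd_blocks (fun S => S \in powerset P)) => [|x _]; last first.
  by rewrite powersetE odd_blocks_subset.
apply: eq_bigr => S; rewrite powersetE => SP.
by rewrite -(card_odd_blocks_fiber SP) -sum1_card; apply: eq_bigl => x; rewrite inE.
Qed.

End Partition.
End OddBlocks.

Lemma r_sf_blocks n (P : {set {set 'I_n}}) (x : {ffun 'I_n -> bool}) :
  r_sf [seq (#|B|, 1%N, orbit_sign x B) | B : {set 'I_n} <- enum P] =
  if odd_blocks P x == set0 then 2 ^ #|P| else 0.
Proof.
have signE (B : {set 'I_n}) :
  orbit_sign x B = if odd (\sum_(i in B) (x i : nat)) then (-1)%R else 1%R by [].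
rewrite /r_sf has_map big_map.
have [/setP ob0 | /set0Pn[B]] := eqVneq (odd_blocks P x) set0; last first.
  rewrite inE => /andP[BP oddB]; case: ifP => // /hasPn/(_ B).
  by rewrite mem_enum /= signE oddB => /(_ BP).
have evenB (B : {set 'I_n}) : B \in enum P -> ~~ odd (\sum_(i in B) (x i : nat)).
  by rewrite mem_enum => BP; have := ob0 B; rewrite inE in_set0 BP => /= ->.
case: ifP => [/hasP[B /evenB eB] | _]; first by rewrite /= signE (negbTE eB).
rewrite big_seq_cond (eq_bigl (fun B => B \in enum P)) => [|B /=].
  by rewrite -big_seq big_enum /= prod_nat_const.
by apply/andb_idr => /evenB eB; rewrite signE (negbTE eB).
Qed.

Lemma partition_porbits (T : finType) (s : {perm T}) : partition (porbits s) [set: T].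
Proof.
have porbitE x : porbit s x = [set y in [set: T] | porbit s x == porbit s y].
  by apply/setP => y; rewrite !inE eq_porbit_mem porbit_sym.
have -> : porbits s = preim_partition (porbit s) [set: T].
  apply/setP => B; apply/imsetP/imsetP => -[x _ ->]; exists x => //; exact/porbitE.
exact: preim_partitionP.
Qed.

Lemma sum_r_lambda_H n : \sum_(sigma : Hn n) r_sf (lambda_H sigma) = 2 ^ n * n`!.
Proof.
rewrite -(pair_bigA _ (fun x s => r_sf (lambda_H (x, s)))) exchange_big /=.
rewrite (eq_bigr (fun _ => 2 ^ n)) => [|s _]; first by rewrite sum_nat_const card_Sn mulnC.
rewrite (eq_bigr (fun x => if odd_blocks (porbits s) x == set0 then 2 ^ #|porbits s| else 0));
  last by move=> x _; exact: r_sf_blocks.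
by rewrite -big_mkcond sum_nat_cond_const (card_odd_blocks0 (partition_porbits s)) card_ord.
Qed.

Theorem mainTheorem19 (n : nat) (hn : (1 <= n)%N) :
  ((\sum_(sigma : Hn n) r_sf (lambda_H sigma))%:R / (2 ^ n * n`!)%:R = 1 :> rat)%R.
Proof.
rewrite sum_r_lambda_H GRing.divff // Num.Theory.pnatr_eq0 muln_eq0 expn_eq0.
by rewrite negb_or /= -lt0n fact_gt0.
Qed.
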